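(* Let $k\in\mathbb{Z}$. For all positive integers $x,n$, $$(-1)^{x-1}G_{n}^{(k)}(x)+G_{n}^{(k)}=2\sum_{m=1}^{n}\sum_{j=1}^{m}\sum_{i=0}^{x-1}(-1)^{i}i^{n-m}\binom{n}{m}\frac{S_{1}(m,j)}{j^{k-1}}.$$
   Context: Convention: $0^0=1$. For $k\in\mathbb{Z}$, $\mathrm{Ei}_k(x)=\sum_{n=1}^{\infty}\frac{x^n}{n^k(n-1)!}$. The poly-Genocchi polynomials $G_n^{(k)}(x)$ are defined by $\frac{2\,\mathrm{Ei}_k(\log(1+t))}{e^t+1}e^{xt}=\sum_{n=0}^{\infty}G_n^{(k)}(x)\frac{t^n}{n!}$, and $G_n^{(k)}=G_n^{(k)}(0)$. $S_1(n,m)$ are the signed Stirling numbers of the first kind: $\frac{(\log(1+t))^m}{m!}=\sum_{n=m}^{\infty}S_1(n,m)\frac{t^n}{n!}$. *)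

From mathcomp Require Import all_boot all_order all_algebra.
Set Implicit Arguments. Unset Strict Implicit. Unset Printing Implicit Defensive.
Import Order.TTheory GRing.Theory Num.Theory.
Local Open Scope ring_scope.

Definition fps := nat -> rat.

Definition fps_mul (f g : fps) : fps :=
  fun n => \sum_(i < n.+1) f i * g (n - i)%N.

Definition fps_one : fps := fun n => if n is 0%N then 1 else 0.

Definition fps_pow (f : fps) (m : nat) : fps := iter m (fps_mul f) fps_one.

Definition fps_scale (c : rat) (f : fps) : fps := fun n => c * f n.

Fixpoint fps_inv_list (f : fps) (n : nat) : seq rat :=
  match n with
  | 0%N => [:: (f 0%N)^-1]
  | n'.+1 => let s := fps_inv_list f n' in
      rcons s (- (f 0%N)^-1 * \sum_(i < n'.+1) f i.+1 * nth 0 s (n' - i)%N)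
  end.

Definition fps_inv (f : fps) : fps := fun n => nth 0 (fps_inv_list f n) n.

Definition fps_expx (x : rat) : fps := fun n => x ^+ n / (n`!)%:R.

Definition fps_expt_plus1 : fps := fun n => if n is 0%N then 2 else 1 / (n`!)%:R.

Definition fps_log1p : fps :=
  fun n => if n is 0%N then 0 else (-1) ^+ n.-1 / n%:R.

Definition Ei_coef (k : int) (n : nat) : rat :=
  if n is 0%N then 0 else ((n%:R : rat) ^ k * (n.-1`!)%:R)^-1.

(* Ei_k(log(1+t)) : composition; since log(1+t) has zero constant term,
   only the terms n <= N contribute to the coefficient of t^N. *)
Definition Ei_log1p (k : int) : fps :=
  fun N => \sum_(n < N.+1) Ei_coef k n * fps_pow fps_log1p n N.

Definition polyGenocchi_gf (k : int) (x : rat) : fps :=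
  fps_mul (fps_mul (fps_scale 2 (Ei_log1p k)) (fps_inv fps_expt_plus1))
          (fps_expx x).

Definition polyGenocchi (k : int) (n : nat) (x : rat) : rat :=
  (n`!)%:R * polyGenocchi_gf k x n.

(* signed Stirling numbers of the first kind:
   (log(1+t))^m / m! = sum_n S1(n,m) t^n / n! *)
Definition stirling1 (n m : nat) : rat :=
  (n`!)%:R * fps_pow fps_log1p m n / (m`!)%:R.

From mathcomp Require Import all_boot all_order all_algebra.
From mathcomp Require Import ring zify.
From Stdlib Require Import FunctionalExtensionality.
Set Implicit Arguments. Unset Strict Implicit. Unset Printing Implicit Defensive.
Import Order.TTheory GRing.Theory Num.Theory.
Local Open Scope ring_scope.

(* Multiplying S_x(t) = sum_(i < x) (-1)^i e^(i t) by e^t + 1 telescopes to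
   1 - (-1)^x e^(x t).  Hence (-1)^(x-1) times the generating function of
   G_n^(k)(x) plus that of G_n^(k) is 2 Ei_k(log(1+t)) S_x(t), in which the
   factor 1/(e^t + 1) has cancelled.  The n-th coefficient of this product is
   a binomial convolution of exponential generating functions; the factor
   Ei_k(log(1+t)) contributes sum_j S1(m,j) / j^(k-1) and S_x contributes
   sum_i (-1)^i i^(n-m). *)

Definition fps_add (f g : fps) : fps := fun n => f n + g n.

(* The ring laws of [fps_mul] are inherited from [{poly rat}], since the first
   n+1 coefficients of a product only depend on those of the factors. *)
Definition fps_trunc (f : fps) (n : nat) : {poly rat} := \poly_(i < n.+1) f i.

Definition agree_upto (n : nat) (f : fps) (p : {poly rat}) :=
  forall i, (i <= n)%N -> f i = p`_i.

Lemma agree_upto_trunc f n : agree_upto n f (fps_trunc f n).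
Proof. by move=> i hi; rewrite coef_poly ltnS hi. Qed.

Lemma agree_uptoM n f g p q :
  agree_upto n f p -> agree_upto n g q -> agree_upto n (fps_mul f g) (p * q).
Proof.
move=> hf hg i hi; rewrite coefM /fps_mul; apply: eq_bigr => j _.
have hj := ltn_ord j.
by rewrite hf ?hg //; lia.
Qed.

Lemma fps_mulC f g : fps_mul f g = fps_mul g f.
Proof.
apply: functional_extensionality => n.
have tr (u : fps) := @agree_upto_trunc u n.
by rewrite (agree_uptoM (tr f) (tr g)) // mulrC -(agree_uptoM (tr g) (tr f)).
Qed.

Lemma fps_mulA f g h : fps_mul f (fps_mul g h) = fps_mul (fps_mul f g) h.
Proof.
apply: functional_extensionality => n.
have tr (u : fps) := @agree_upto_trunc u n.
by rewrite (agree_uptoM (tr f) (agree_uptoM (tr g) (tr h))) // mulrA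
  -(agree_uptoM (agree_uptoM (tr f) (tr g)) (tr h)).
Qed.

Lemma fps_mul1 f : fps_mul fps_one f = f.
Proof.
apply: functional_extensionality => n.
rewrite /fps_mul big_ord_recl /= mul1r subn0 big1 ?addr0 // => i _.
by rewrite mul0r.
Qed.

Lemma fps_mulDr f g h :
  fps_mul f (fps_add g h) = fps_add (fps_mul f g) (fps_mul f h).
Proof.
apply: functional_extensionality => n.
by rewrite /fps_mul /fps_add -big_split; apply: eq_bigr => i _; rewrite mulrDr.
Qed.

Lemma fps_mulZr c f g : fps_mul f (fps_scale c g) = fps_scale c (fps_mul f g).
Proof.
apply: functional_extensionality => n.
by rewrite /fps_mul /fps_scale mulr_sumr; apply: eq_bigr => i _; rewrite mulrCA.
Qed.

Lemma fps_mulZl c f g : fps_mul (fps_scale c f) g = fps_scale c (fps_mul f g).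
Proof. by rewrite fps_mulC fps_mulZr fps_mulC. Qed.

Lemma fps_mul_sumr (I : Type) (r : seq I) (F : I -> fps) f :
  fps_mul f (fun n => \sum_(i <- r) F i n) =
  (fun n => \sum_(i <- r) fps_mul f (F i) n).
Proof.
apply: functional_extensionality => n.
by rewrite /fps_mul exchange_big; apply: eq_bigr => j _; rewrite mulr_sumr.
Qed.

Lemma natr_fact_neq0 (m : nat) : (m`!)%:R != 0 :> rat.
Proof. by rewrite pnatr_eq0 -lt0n fact_gt0. Qed.

Lemma fps_mul_egf f g n :
  (n`!)%:R * fps_mul f g n =
  \sum_(m < n.+1) ('C(n, m))%:R * ((m`!)%:R * f m)
                  * (((n - m)`!)%:R * g (n - m)%N).
Proof.
rewrite /fps_mul mulr_sumr; apply: eq_bigr => m _.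
by rewrite -(bin_fact (ltn_ord m : (m <= n)%N)) !natrM; ring.
Qed.

Lemma size_fps_inv_list f n : size (fps_inv_list f n) = n.+1.
Proof. by elim: n => [|n IH] //=; rewrite size_rcons IH. Qed.

Lemma nth_fps_inv_list f n i :
  (i <= n)%N -> nth 0 (fps_inv_list f n) i = fps_inv f i.
Proof.
elim: n => [|n IH] hi; first by move: hi; rewrite leqn0 => /eqP ->.
rewrite /= nth_rcons size_fps_inv_list.
have [hlt|hge] := ltnP i n.+1; first by rewrite IH.
have -> : i = n.+1 by apply/eqP; rewrite eqn_leq hi hge.
by rewrite eqxx /fps_inv /= nth_rcons size_fps_inv_list ltnn eqxx.
Qed.

Lemma fps_invS f n :
  fps_inv f n.+1 = - (f 0%N)^-1 * \sum_(i < n.+1) f i.+1 * fps_inv f (n - i)%N.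
Proof.
rewrite /fps_inv /= nth_rcons size_fps_inv_list ltnn eqxx.
by congr (_ * _); apply: eq_bigr => i _; rewrite nth_fps_inv_list //; lia.
Qed.

Lemma fps_mulV f : f 0%N != 0 -> fps_mul f (fps_inv f) = fps_one.
Proof.
move=> f0; apply: functional_extensionality => -[|n].
  by rewrite /fps_mul big_ord1 /fps_inv /= mulfV.
rewrite /fps_mul big_ord_recl /= subn0 fps_invS mulrA mulrN mulfV // mulN1r.
rewrite addrC; apply/eqP; rewrite subr_eq0; apply/eqP.
by apply: eq_bigr => i _; rewrite subSS.
Qed.

Lemma fact_mul_fps_expx a n : (n`!)%:R * fps_expx a n = a ^+ n.
Proof. by rewrite /fps_expx mulrC divfK ?natr_fact_neq0. Qed.

Lemma fps_expxD a b : fps_mul (fps_expx a) (fps_expx b) = fps_expx (a + b).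
Proof.
apply: functional_extensionality => n; apply: (mulfI (natr_fact_neq0 n)).
rewrite fps_mul_egf fact_mul_fps_expx addrC exprDn.
by apply: eq_bigr => m _; rewrite !fact_mul_fps_expx mulr_natl mulrnAl mulrC.
Qed.

Lemma fps_expx0 : fps_expx 0 = fps_one.
Proof.
apply: functional_extensionality => -[|n]; rewrite /fps_expx /=.
  by rewrite expr0 divr1.
by rewrite expr0n mul0r.
Qed.

Lemma fps_expt_plus1E : fps_expt_plus1 = fps_add (fps_expx 1) fps_one.
Proof.
apply: functional_extensionality => -[|n]; rewrite /fps_add /fps_expx /=.
  by rewrite expr0 divr1.
by rewrite expr1n addr0.
Qed.

Definition alt_exp_sum (x : nat) : fps :=
  fun n => \sum_(0 <= i < x) fps_scale ((-1) ^+ i) (fps_expx i%:R) n.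

Lemma fact_mul_alt_exp_sum x n :
  (n`!)%:R * alt_exp_sum x n = \sum_(0 <= i < x) (-1) ^+ i * (i%:R : rat) ^+ n.
Proof.
rewrite /alt_exp_sum mulr_sumr; apply: eq_bigr => i _.
by rewrite /fps_scale mulrCA fact_mul_fps_expx.
Qed.

Lemma fps_mul_expt_plus1_alt_exp_sum x :
  fps_mul fps_expt_plus1 (alt_exp_sum x) =
  fps_add fps_one (fps_scale (- (-1) ^+ x) (fps_expx x%:R)).
Proof.
rewrite /alt_exp_sum fps_mul_sumr; apply: functional_extensionality => n.
have telescope (i : nat) :
    fps_mul fps_expt_plus1 (fps_scale ((-1) ^+ i) (fps_expx i%:R)) n =
    - ((-1) ^+ i.+1 * fps_expx i.+1%:R n) - - ((-1) ^+ i * fps_expx i%:R n).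
  rewrite fps_mulZr fps_mulC fps_expt_plus1E fps_mulDr fps_expxD fps_mulC.
  by rewrite fps_mul1 /fps_scale /fps_add -natr1 exprS; ring.
under eq_bigr do rewrite telescope.
rewrite telescope_sumr // fps_expx0 /fps_add /fps_scale expr0 mul1r.
by rewrite opprK addrC mulNr.
Qed.

Lemma polyGenocchi_gf_alt_sum k x : (0 < x)%N ->
  fps_add (fps_scale ((-1) ^+ (x - 1)%N) (polyGenocchi_gf k x%:R))
          (polyGenocchi_gf k 0)
  = fps_mul (fps_scale 2 (Ei_log1p k)) (alt_exp_sum x).
Proof.
move=> x_gt0; set A := fps_scale 2 (Ei_log1p k).
have sign : (-1) ^+ (x - 1)%N = - (-1) ^+ x :> rat.
  by case: x x_gt0 => // x _; rewrite exprS subSS subn0 mulN1r opprK.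
transitivity (fps_mul (fps_mul A (fps_inv fps_expt_plus1))
                      (fps_mul fps_expt_plus1 (alt_exp_sum x))).
  rewrite fps_mul_expt_plus1_alt_exp_sum -sign fps_mulDr fps_mulZr -fps_expx0.
  by apply: functional_extensionality => n; rewrite /fps_add addrC.
by rewrite -fps_mulA (fps_mulA (fps_inv _)) (fps_mulC (fps_inv _)) fps_mulV //
  fps_mul1.
Qed.

Lemma fact_mul_Ei_log1p k m :
  (m`!)%:R * Ei_log1p k m =
  \sum_(1 <= j < m.+1) stirling1 m j / (j%:R : rat) ^ (k - 1).
Proof.
rewrite /Ei_log1p.
rewrite -(big_mkord xpredT (fun j => Ei_coef k j * fps_pow fps_log1p j m)).
rewrite big_ltn // mul0r add0r mulr_sumr; apply: eq_big_nat => -[//|j] _.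
rewrite /Ei_coef /=.
have j1_neq0 : j.+1%:R != 0 :> rat by rewrite pnatr_eq0.
have j1_exp_neq0 : (j.+1%:R : rat) ^ (k - 1) != 0 by rewrite expfz_neq0.
have -> : (j.+1%:R : rat) ^ k = (j.+1%:R : rat) ^ (k - 1) * j.+1%:R.
  by rewrite -{1}(subrK 1 k) expfzDr // expr1z.
rewrite /stirling1 factS natrM /=.
by field; rewrite j1_exp_neq0 natr_fact_neq0 nat1r j1_neq0.
Qed.

Lemma fact_mul_Ei_log1p_alt_exp_sum k x n :
  (n`!)%:R * fps_mul (Ei_log1p k) (alt_exp_sum x) n =
  \sum_(1 <= m < n.+1) \sum_(1 <= j < m.+1) \sum_(0 <= i < x)
      (-1) ^+ i * (i%:R : rat) ^+ (n - m)%N * ('C(n, m))%:R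
      * (stirling1 m j / (j%:R : rat) ^ (k - 1)).
Proof.
rewrite fps_mul_egf -(big_mkord xpredT (fun m => 'C(n, m)%:R
  * ((m`!)%:R * Ei_log1p k m) * (((n - m)`!)%:R * alt_exp_sum x (n - m)%N))).
rewrite big_ltn // fact_mul_Ei_log1p (big_geq (m := 1) (n := 1)) //.
rewrite mulr0 mul0r add0r.
apply: eq_big_nat => m _.
rewrite fact_mul_Ei_log1p fact_mul_alt_exp_sum mulr_sumr mulr_suml.
apply: eq_bigr => j _; rewrite mulr_sumr; apply: eq_bigr => i _.
by ring.
Qed.

Theorem theorem4 (k : int) (x n : nat) (hx : (0 < x)%N) (hn : (0 < n)%N) :
  (-1) ^+ (x - 1)%N * polyGenocchi k n x%:R + polyGenocchi k n 0 =
  2 * \sum_(1 <= m < n.+1) \sum_(1 <= j < m.+1) \sum_(0 <= i < x)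
      (-1) ^+ i * (i%:R : rat) ^+ (n - m)%N * ('C(n, m))%:R
      * (stirling1 m j / (j%:R : rat) ^ (k - 1)).
Proof.
rewrite -fact_mul_Ei_log1p_alt_exp_sum.
have := congr1 (fun f => f n) (polyGenocchi_gf_alt_sum k hx).
rewrite fps_mulZl /fps_add /fps_scale /polyGenocchi => gf_n.
by rewrite [RHS]mulrCA -gf_n; ring.
Qed.
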